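(* Let $p$ be a prime and $f(x)=(x-x_1)\cdots(x-x_r)\in\mathbb{F}_p[x_1,\ldots,x_r][x]$. Let $r,e,d$ be integers with $r\ge2$, $\frac{p-1}{2}<e\le p-1$, $1\le d\le p$. Then for all $1\le i\le r$ and $1\le j\le r$, the element $\left\{\left(\frac{\partial}{\partial x}\right)^{p-d}f(x)^e\right\}[x_i^p,x_j]$ is divisible by $\prod_{1\le \ell\le r,\ \ell\ne i}(x_i-x_\ell)^{2e-(p-1)}$ in $\mathbb{F}_p[x_1,\ldots,x_r]$.
   Context: $x_1,\dots,x_r$ are independent indeterminates over $\mathbb{F}_p$. For a field $K$ of characteristic $p$ and $F(x)\in K(x)$, write uniquely $F(x)=\sum_{i=0}^{p-1}F_i(x^p)x^i$ with $F_i(x^p)\in K(x^p)$, and define $F[t,x]=\sum_{i=0}^{p-1}F_i(t)x^i$ for a new variable $t$; $F[x_i^p,x_j]$ denotes the substitution $t=x_i^p$, $x=x_j$. *)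

From HB Require Import structures.
From mathcomp Require Import all_boot all_order all_algebra.
From mathcomp Require Import mpoly.
Set Implicit Arguments. Unset Strict Implicit. Unset Printing Implicit Defensive.
Import GRing.Theory.
Local Open Scope ring_scope.

Definition Rx (p r : nat) := {mpoly 'F_p[r]}.

Definition fpoly (p r : nat) : {poly {mpoly 'F_p[r]}} :=
  \prod_(l < r) ('X - ('X_l)%:P).

(* For F(x) = sum_k F`_k x^k, writing k = p*(k %/ p) + (k %% p), we get
   F(x) = sum_{i<p} F_i(x^p) x^i with F_i(t) = sum_{k %% p = i} F`_k t^(k %/ p);
   hence F[t,x] = sum_k F`_k t^(k %/ p) x^(k %% p).  This is the substitution
   F[a,b] (t := a, x := b). *)
Definition subst_tx (p : nat) (R : comNzRingType) (F : {poly R}) (a b : R) : R :=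
  \sum_(k < size F) F`_k * a ^+ (k %/ p) * b ^+ (k %% p).

From HB Require Import structures.
From mathcomp Require Import all_boot all_order all_algebra.
From mathcomp Require Import mpoly zify.

Set Implicit Arguments.
Unset Strict Implicit.
Unset Printing Implicit Defensive.

Import GRing.Theory.
Local Open Scope ring_scope.

(* Put a := x_i, m := p - d and G := (d/dx)^m f^e, and expand G in powers of
   x - a with coefficients g_k.  In characteristic p, (x - a)^p = x^p - a^p, and
   the substitution F |-> F[a^p, b] is additive and turns x^p H into a^p H[a^p, b];
   hence it kills (x - a)^k for every k >= p, and it suffices that
   D := prod_(l <> i) (a - x_l)^(2e - (p - 1)) divides g_k for k < p.
   Now g_k = (m + k)^_m c_(m + k), where c_n are the coefficients of
   f(x + a)^e = x^e prod_(l <> i) (x + a - x_l)^e.  The falling factorial is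
   divisible by p as soon as m + k >= p; otherwise n := m + k <= p - 1 and c_n
   is divisible by prod_(l <> i) (a - x_l)^(2e - n), a multiple of D. *)

Section Divisibility.
Variable R : comNzRingType.
Implicit Types x y z u v : R.

Definition dvdr x y := exists q, y = q * x.

Lemma dvdr0 x : dvdr x 0.
Proof. by exists 0; rewrite mul0r. Qed.

Lemma dvdrr x : dvdr x x.
Proof. by exists 1; rewrite mul1r. Qed.

Lemma dvd1r y : dvdr 1 y.
Proof. by exists y; rewrite mulr1. Qed.

Lemma dvdrD x y z : dvdr x y -> dvdr x z -> dvdr x (y + z).
Proof. by move=> [a ->] [b ->]; exists (a + b); rewrite mulrDl. Qed.

Lemma dvdr_mulr x y z : dvdr x y -> dvdr x (y * z).
Proof. by move=> [a ->]; exists (a * z); rewrite mulrAC. Qed.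

Lemma dvdr_mul x y u v : dvdr x y -> dvdr u v -> dvdr (x * u) (y * v).
Proof. by move=> [a ->] [b ->]; exists (a * b); rewrite mulrACA. Qed.

Lemma dvdr_trans x y z : dvdr x y -> dvdr y z -> dvdr x z.
Proof. by move=> [a ->] [b ->]; exists (b * a); rewrite mulrA. Qed.

Lemma dvdr_sum I (s : seq I) (P : pred I) (F : I -> R) x :
  (forall i, P i -> dvdr x (F i)) -> dvdr x (\sum_(i <- s | P i) F i).
Proof. by move=> h; apply: big_ind => //; [apply: dvdr0 | apply: dvdrD]. Qed.

Lemma dvdr_exp2l x m n : (m <= n)%N -> dvdr (x ^+ m) (x ^+ n).
Proof. by move=> h; exists (x ^+ (n - m)); rewrite -exprD subnK. Qed.

Lemma dvdr_prod I (s : seq I) (P : pred I) (F G : I -> R) :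
  (forall i, P i -> dvdr (F i) (G i)) ->
  dvdr (\prod_(i <- s | P i) F i) (\prod_(i <- s | P i) G i).
Proof.
move=> h; apply: (big_ind2 dvdr) => //; first exact: dvd1r.
by move=> ? ? ? ?; apply: dvdr_mul.
Qed.

Definition dvdr_coefs u n (F : {poly R}) := forall j, (j <= n)%N -> dvdr u F`_j.

Lemma dvdr_coefsM u v n F G :
  dvdr_coefs u n F -> dvdr_coefs v n G -> dvdr_coefs (u * v) n (F * G).
Proof.
move=> hF hG j hj; rewrite coefM; apply: dvdr_sum => k _.
by apply: dvdr_mul; [apply: hF | apply: hG]; have := ltn_ord k; lia.
Qed.

Lemma dvdr_coefs_prod I (s : seq I) (P : pred I) (u : I -> R) n F :
  (forall i, P i -> dvdr_coefs (u i) n (F i)) ->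
  dvdr_coefs (\prod_(i <- s | P i) u i) n (\prod_(i <- s | P i) F i).
Proof.
move=> h; apply: (big_ind2 (fun u F => dvdr_coefs u n F)) => //.
- by move=> j _; apply: dvd1r.
- by move=> ? ? ? ?; apply: dvdr_coefsM.
Qed.

Lemma dvdr_coefs_XaddC_exp c e n : dvdr_coefs (c ^+ (e - n)) n (('X + c%:P) ^+ e).
Proof.
elim: e n => [|e IH] n j hj; first by apply: dvd1r.
rewrite exprSr mulrDr coefD coefMX coefMC; apply: dvdrD.
  case: eqP => [_|/eqP j0]; first exact: dvdr0.
  have -> : (e.+1 - n = e - n.-1)%N by lia.
  by apply: IH; lia.
apply: (@dvdr_trans _ (c ^+ (e - n) * c)).
  by rewrite -exprSr; apply: dvdr_exp2l; lia.
exact: dvdr_mul (IH n j hj) (dvdrr c).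
Qed.

Lemma dvdr_coef_XnM_prod_XaddC I (s : seq I) (P : pred I) (c : I -> R) e n :
  dvdr (\prod_(l <- s | P l) c l ^+ (2 * e - n))
       ('X^e * \prod_(l <- s | P l) ('X + (c l)%:P) ^+ e)`_n.
Proof.
rewrite coefXnM; case: ltnP => hen; first exact: dvdr0.
have -> : (2 * e - n = e - (n - e))%N by lia.
have coefs_prod : dvdr_coefs (\prod_(l <- s | P l) c l ^+ (e - (n - e))) (n - e)
    (\prod_(l <- s | P l) ('X + (c l)%:P) ^+ e).
  by apply: dvdr_coefs_prod => l _; apply: dvdr_coefs_XaddC_exp.
exact: coefs_prod.
Qed.

End Divisibility.
Arguments dvdr {R}.

Lemma prod_XsubC_exp_comp_XaddC (R : comNzRingType) n (x : 'I_n -> R) i e :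
  (\prod_(l < n) ('X - (x l)%:P)) ^+ e \Po ('X + (x i)%:P)
  = 'X^e * \prod_(l < n | l != i) ('X + (x i - x l)%:P) ^+ e.
Proof.
rewrite -prodrXl (rmorph_prod (comp_poly ('X + (x i)%:P))) (bigD1 i) //=.
rewrite rmorphXn /= comp_polyB comp_polyX comp_polyC addrK; congr (_ * _).
apply: eq_bigr => l _; rewrite rmorphXn /= comp_polyB comp_polyX comp_polyC.
by rewrite polyCB addrA.
Qed.

Lemma derivn_comp_XaddC (R : comNzRingType) (F : {poly R}) c m :
  (F \Po ('X + c%:P))^`(m) = F^`(m) \Po ('X + c%:P).
Proof.
elim: m => [|m IH]; first by rewrite !derivn0.
by rewrite !derivnS IH deriv_comp derivD derivX derivC addr0 mulr1.
Qed.

Lemma prime_dvdn_ffact p m k : prime p -> (k < p)%N -> (p <= m + k)%N ->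
  (p %| (m + k) ^_ m)%N.
Proof.
move=> hp hk hmk; have hi : (m + k - p < m)%N by lia.
rewrite ffact_prod (bigD1 (Ordinal hi)) //= dvdn_mulr //.
by have -> : (m + k - (m + k - p) = p)%N by lia.
Qed.

Section SubstTx.
Variables (R : comNzRingType) (p : nat) (a b : R).
Implicit Types F G H : {poly R}.
Local Notation L F := (subst_tx p F a b).

Lemma subst_tx_widen F N : (size F <= N)%N ->
  L F = \sum_(k < N) F`_k * a ^+ (k %/ p) * b ^+ (k %% p).
Proof.
move=> h; rewrite /subst_tx.
rewrite (big_ord_widen _ (fun k => F`_k * a ^+ (k %/ p) * b ^+ (k %% p)) h).
rewrite big_mkcond /=; apply: eq_bigr => k _; case: ltnP => // hk.
by rewrite nth_default // !mul0r.
Qed.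

Lemma subst_tx0 : L 0 = 0.
Proof. by rewrite /subst_tx size_poly0 big_ord0. Qed.

Lemma subst_txD F G : L (F + G) = L F + L G.
Proof.
pose N := (size F + size G)%N.
rewrite (@subst_tx_widen (F + G) N); last first.
  by apply: leq_trans (size_polyD _ _) _; rewrite geq_max leq_addr leq_addl.
rewrite (@subst_tx_widen F N) ?leq_addr // (@subst_tx_widen G N) ?leq_addl //.
by rewrite -big_split; apply: eq_bigr => k _; rewrite coefD !mulrDl.
Qed.

Lemma subst_txZ c F : L (c *: F) = c * L F.
Proof.
rewrite (@subst_tx_widen _ (size F)) ?size_scale_leq // /subst_tx mulr_sumr.
by apply: eq_bigr => k _; rewrite coefZ !mulrA.
Qed.

Lemma subst_tx_sum I (s : seq I) (P : pred I) (F : I -> {poly R}) :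
  L (\sum_(i <- s | P i) F i) = \sum_(i <- s | P i) L (F i).
Proof. exact: (big_morph (fun F => L F) subst_txD subst_tx0). Qed.

Lemma subst_tx_XnM H : (0 < p)%N -> L ('X^p * H) = a * L H.
Proof.
move=> p_gt0; pose N := (size ('X^p * H)%R + size H)%N.
rewrite (@subst_tx_widen _ (p + N)); last by rewrite /N; lia.
rewrite (@subst_tx_widen H N) ?leq_addl // big_split_ord /=.
rewrite big1 ?add0r => [|k _]; last by rewrite coefXnM ltn_ord !mul0r.
rewrite mulr_sumr; apply: eq_bigr => k _.
rewrite coefXnM ltnNge leq_addr /= addKn divnDl ?dvdnn // divnn p_gt0 modnDl.
by rewrite add1n exprS mulrCA !mulrA.
Qed.

End SubstTx.

Section CharacteristicP.
Variables (R : comNzRingType) (p : nat).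
Hypothesis pcharRp : p \in [pchar R].

Lemma exp_XsubC_pchar c : ('X - c%:P) ^+ p = 'X^p - (c ^+ p)%:P :> {poly R}.
Proof.
have pcharRXp : p \in [pchar {poly R}] by rewrite pchar_poly.
rewrite -(pFrobenius_autE pcharRXp) pFrobenius_autB_comm; last exact: mulrC.
by rewrite !pFrobenius_autE rmorphXn.
Qed.

Lemma subst_tx_XsubC_exp (c b : R) k : (p <= k)%N ->
  subst_tx p (('X - c%:P) ^+ k) (c ^+ p) b = 0.
Proof.
move=> hk; rewrite -(subnKC hk) exprD exp_XsubC_pchar mulrBl mul_polyC.
rewrite -scaleNr subst_txD subst_tx_XnM ?subst_txZ ?mulNr ?addrN //.
exact: prime_gt0 (pcharf_prime pcharRp).
Qed.

Lemma dvdr_subst_tx (D c b : R) G :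
  (forall k, (k < p)%N -> dvdr D (G \Po ('X + c%:P))`_k) ->
  dvdr D (subst_tx p G (c ^+ p) b).
Proof.
move=> hdv; rewrite -[G](comp_polyXaddC_K _ c) comp_polyE subst_tx_sum.
apply: dvdr_sum => k _; rewrite subst_txZ.
case: (ltnP k p) => hk; first exact/dvdr_mulr/hdv.
by rewrite subst_tx_XsubC_exp // mulr0; apply: dvdr0.
Qed.

Lemma dvdr_coef_derivn_comp_XaddC (D c : R) F m :
  (forall n, (n < p)%N -> dvdr D (F \Po ('X + c%:P))`_n) ->
  forall k, (k < p)%N -> dvdr D (F^`(m) \Po ('X + c%:P))`_k.
Proof.
move=> hdv k hk; rewrite -derivn_comp_XaddC coef_derivn.
case: (ltnP (m + k) p) => hmk; first by rewrite -mulr_natr; apply/dvdr_mulr/hdv.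
have /dvdnP[q ->] := prime_dvdn_ffact (pcharf_prime pcharRp) hk hmk.
by rewrite mulrnA (mulrn_pchar pcharRp); apply: dvdr0.
Qed.

End CharacteristicP.

Theorem lemma1 (p r e d : nat) (hp : prime p) (hr : (2 <= r)%N)
  (he1 : (p - 1 < 2 * e)%N) (he2 : (e <= p - 1)%N)
  (hd1 : (1 <= d)%N) (hd2 : (d <= p)%N) (i j : 'I_r) :
  exists q : {mpoly 'F_p[r]},
    subst_tx p (((fpoly p r) ^+ e)^`(p - d)) ('X_i ^+ p) 'X_j
    = q * \prod_(l < r | l != i) ('X_i - 'X_l) ^+ (2 * e - (p - 1)).
Proof.
have pcharRp : p \in [pchar {mpoly 'F_p[r]}] by rewrite pchar_lalg pchar_Fp.
apply/(dvdr_subst_tx pcharRp)/(dvdr_coef_derivn_comp_XaddC pcharRp) => n hn.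
rewrite prod_XsubC_exp_comp_XaddC.
apply: dvdr_trans (dvdr_coef_XnM_prod_XaddC _ _ _ e n).
by apply: dvdr_prod => l _; apply: dvdr_exp2l; lia.
Qed.
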